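(* Let $g=\prod_{i=1}^e g_i\in\mathbb{F}_2[X]$ with $g\mid X^n-1$, where $g_1,\dots,g_e$ are distinct irreducible polynomials, and for each $i$ let $\alpha_i$ be a root of $g_i$ in its splitting field. For $f\in\mathbb{F}_2[X]$ and $0\le i\le n-1$ set $\mathrm{LC}(i,f)=(\alpha_1^if(\alpha_1),\alpha_2^if(\alpha_2),\dots,\alpha_e^if(\alpha_e))$ and $\mathrm{LC}(f)=\{\mathrm{LC}(i,f):0\le i\le n-1\}$. Then for $f_1,f_2\in\mathbb{F}_2[X]$, $\mathrm{LC}(f_1)=\mathrm{LC}(f_2)$ if and only if $f_1(X)\equiv X^kf_2(X)\pmod{g(X)}$ for some integer $k\ge 0$.
   Context: $\mathrm{LC}(i,f)$ is the value of the linear combination, with coefficients given by the coefficients of $f$, of consecutive columns starting at column $i$ of the parity-check matrix whose $j$-th column is $(\alpha_1^j,\dots,\alpha_e^j)$ of the binary cyclic code generated by $g$. *)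

From HB Require Import structures.
From mathcomp Require Import all_boot all_order all_algebra all_field.
Set Implicit Arguments. Unset Strict Implicit. Unset Printing Implicit Defensive.
Import GRing.Theory.
Local Open Scope ring_scope.

Definition evalF2 (L : fieldExtType 'F_2) (f : {poly 'F_2}) (a : L) : L :=
  (map_poly (in_alg L) f).[a].

Definition LCi (L : fieldExtType 'F_2) (e : nat) (alpha : 'I_e -> L)
  (i : nat) (f : {poly 'F_2}) : 'rV[L]_e :=
  \row_(j < e) (alpha j ^+ i * evalF2 f (alpha j)).

(* LC(f) = { LC(i,f) : 0 <= i <= n-1 }, as a sequence used as a set *)
Definition LCset (L : fieldExtType 'F_2) (e : nat) (alpha : 'I_e -> L)
  (n : nat) (f : {poly 'F_2}) : seq 'rV[L]_e :=
  [seq LCi alpha i f | i <- iota 0 n].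

(* An irreducible g_j with root alpha_j divides h exactly when h(alpha_j) = 0,
   and pairwise distinct irreducibles are pairwise coprime, so g divides h iff
   h vanishes at every alpha_j.  Hence f1 = X^k f2 (mod g) iff
   f1(alpha_j) = alpha_j^k f2(alpha_j) for all j, i.e. LC(0,f1) = LC(k,f2).
   Since g | X^n - 1, every alpha_j is an n-th root of unity, so such a relation
   turns LC(i,f1) into LC(i+k mod n, f2), and conversely with the exponent
   (n-1)k, which inverts k modulo n. *)

From HB Require Import structures.
From mathcomp Require Import all_boot all_order all_algebra all_field.
Set Implicit Arguments.
Unset Strict Implicit.
Unset Printing Implicit Defensive.

Import GRing.Theory.
Local Open Scope ring_scope.

Section PolyDivisibility.
Variable F : fieldType.
Implicit Types p q d h : {poly F}.

Lemma eq_modp_dvdp d p q : (p %% d == q %% d) = (d %| p - q).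
Proof. by rewrite -subr_eq0 -modpN -modpD; apply/eqP/modp_eq0P. Qed.

Lemma irredp_coprimep p q : irreducible_poly p -> ~~ (p %| q) -> coprimep p q.
Proof.
move=> irr_p ndvd; rewrite -gcdp_eqp1.
have [//|gcd_p] := irredp_XsubCP irr_p (dvdp_gcdl p q).
by rewrite -(eqp_dvdl _ gcd_p) dvdp_gcdr in ndvd.
Qed.

Lemma irredp_dvdp_root (K : fieldType) (f : {rmorphism F -> K}) q h x :
  irreducible_poly q -> root (map_poly f q) x -> root (map_poly f h) x ->
  q %| h.
Proof.
move=> irr_q qx0; apply: contraTT => ndvd.
by apply: coprimep_root qx0; rewrite coprimep_map irredp_coprimep.
Qed.

Lemma prod_coprimep_dvdp (I : finType) (P : I -> {poly F}) h :
  (forall i j, i != j -> coprimep (P i) (P j)) ->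
  (forall i, P i %| h) -> \prod_i P i %| h.
Proof.
move=> cop dvdh; rewrite -big_enum; elim: (enum I) (enum_uniq I) => [|i r IHr].
  by rewrite big_nil dvd1p.
rewrite cons_uniq big_cons => /andP[ri uniq_r].
rewrite Gauss_dvdp ?dvdh ?IHr // big_seq.
apply: (big_ind (coprimep (P i))) => [|u v|j jr]; first exact: coprimep1.
  by rewrite coprimepMr => -> ->.
by apply: cop; apply: contraNneq ri => ->.
Qed.

End PolyDivisibility.

Lemma F2_monic (p : {poly 'F_2}) : p != 0 -> p \is monic.
Proof.
by rewrite monicE -lead_coef_eq0; case: (lead_coef p) => [[|[|m]]].
Qed.

Lemma F2_irredp_coprimep (p q : {poly 'F_2}) :
  irreducible_poly p -> irreducible_poly q -> p != q -> coprimep p q.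
Proof.
move=> irr_p irr_q neq_pq; apply: irredp_coprimep => //.
apply: contra neq_pq => /(irredp_XsubCP irr_q) [p1|pq].
  by move: irr_p.1; rewrite (eqp_size p1) size_poly1.
by rewrite eqp_monic ?F2_monic ?irredp_neq0 in pq.
Qed.

Lemma evalF2E (L : fieldExtType 'F_2) (f : {poly 'F_2}) (a : L) :
  evalF2 f a = horner_alg a f.
Proof. by []. Qed.

Section LinearCombinations.
Variables (L : fieldExtType 'F_2) (n e : nat).
Variables (gs : 'I_e -> {poly 'F_2}) (alpha : 'I_e -> L).
Hypothesis hirr : forall j, irreducible_poly (gs j).
Hypothesis hdist : forall j k, gs j = gs k -> j = k.
Hypothesis hdvd : (\prod_(j < e) gs j) %| ('X^n - 1).
Hypothesis hroot : forall j, root (map_poly (in_alg L) (gs j)) (alpha j).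

Let g := \prod_(j < e) gs j.

Lemma dvd_prod_gsP h : reflect (forall j, evalF2 h (alpha j) = 0) (g %| h).
Proof.
apply: (iffP idP) => [g_h j|h_roots].
  apply/rootP; apply: root_dvdp (hroot j); rewrite dvdp_map.
  by apply: dvdp_trans g_h; rewrite /g (bigD1 j) //= dvdp_mulIl.
apply: prod_coprimep_dvdp => [i j neq_ij|j].
  by apply: F2_irredp_coprimep => //; apply: contraNneq neq_ij => /hdist ->.
exact/(irredp_dvdp_root (hirr j) (hroot j))/rootP/h_roots.
Qed.

Lemma alpha_expn j : alpha j ^+ n = 1.
Proof.
apply/eqP; rewrite -subr_eq0; apply/eqP; move/dvd_prod_gsP: hdvd => /(_ j).
by rewrite evalF2E rmorphB rmorphXn rmorph1 /= horner_algX.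
Qed.

Lemma alpha_exp_modn j m : alpha j ^+ m = alpha j ^+ (m %% n).
Proof.
by rewrite {1}(divn_eq m n) exprD mulnC exprM alpha_expn expr1n mul1r.
Qed.

Definition shift_related (f1 f2 : {poly 'F_2}) (k : nat) :=
  forall j, evalF2 f1 (alpha j) = alpha j ^+ k * evalF2 f2 (alpha j).

Lemma shift_relatedP f1 f2 k :
  shift_related f1 f2 k <-> f1 %% g = ('X^k * f2) %% g.
Proof.
have evalB j : evalF2 (f1 - 'X^k * f2) (alpha j) =
    evalF2 f1 (alpha j) - alpha j ^+ k * evalF2 f2 (alpha j).
  by rewrite !evalF2E rmorphB rmorphM rmorphXn /= horner_algX.
split=> [rel | /eqP eq_mod j].
  apply/eqP; rewrite eq_modp_dvdp.
  by apply/dvd_prod_gsP => j; rewrite evalB rel subrr.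
move: eq_mod; rewrite eq_modp_dvdp => /dvd_prod_gsP/(_ j).
by rewrite evalB => /eqP; rewrite subr_eq0 => /eqP.
Qed.

Lemma LCi_shift f1 f2 k i : shift_related f1 f2 k ->
  LCi alpha i f1 = LCi alpha ((i + k) %% n) f2.
Proof.
by move=> rel; apply/rowP => j; rewrite !mxE rel mulrA -exprD -alpha_exp_modn.
Qed.

Hypothesis hn : (0 < n)%N.

Lemma LCset_shift_subset f1 f2 k : shift_related f1 f2 k ->
  {subset LCset alpha n f1 <= LCset alpha n f2}.
Proof.
move=> rel _ /mapP[i _ ->]; rewrite (LCi_shift _ rel); apply: map_f.
by rewrite mem_iota add0n ltn_pmod.
Qed.

Lemma shift_related_sym f1 f2 k :
  shift_related f1 f2 k -> shift_related f2 f1 (n.-1 * k).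
Proof.
move=> rel j; rewrite rel mulrA -exprD -mulSnr prednK //.
by rewrite exprM alpha_expn expr1n mul1r.
Qed.

Lemma LCset_eq_shift_related f1 f2 :
  LCset alpha n f1 =i LCset alpha n f2 -> exists k, shift_related f1 f2 k.
Proof.
move=> eqLC; have /mapP[k _ LC0] : LCi alpha 0 f1 \in LCset alpha n f2.
  by rewrite -eqLC; apply: map_f; rewrite mem_iota.
exists k => j; have := congr1 (fun M : 'rV_e => M 0 j) LC0.
by rewrite !mxE mul1r.
Qed.

End LinearCombinations.

Theorem lemma1 (L : fieldExtType 'F_2) (n e : nat) (gs : 'I_e -> {poly 'F_2})
  (alpha : 'I_e -> L)
  (hn : (0 < n)%N)
  (hirr : forall j, irreducible_poly (gs j))
  (hdist : forall j k, gs j = gs k -> j = k)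
  (hdvd : (\prod_(j < e) gs j) %| ('X^n - 1))
  (hroot : forall j, root (map_poly (in_alg L) (gs j)) (alpha j))
  (f1 f2 : {poly 'F_2}) :
  (LCset alpha n f1 =i LCset alpha n f2) <->
  (exists k : nat, f1 %% (\prod_(j < e) gs j) = ('X^k * f2) %% (\prod_(j < e) gs j)).
Proof.
have relP := shift_relatedP hirr hdist hroot.
have subLC := LCset_shift_subset hirr hdist hdvd hroot hn.
split=> [/(LCset_eq_shift_related hn) [k /relP rel] | [k /relP rel] x].
  by exists k.
apply/idP/idP; apply: subLC; first exact: rel.
exact: shift_related_sym hirr hdist hdvd hroot hn _ _ _ rel.
Qed.
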